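(* Let $n\ge 1$ be an integer, $a>0$, and let $a_0,\dots,a_{n-1}:((-a,a)\setminus\{0\})\times\mathbb{K}\to\mathbb{K}$ be arbitrary functions, where $\mathbb{K}=\mathbb{R}$ or $\mathbb{C}$. Let $f\in C^\infty(-a,a)$ be a solution of $$f^{(n)}(x)+a_{n-1}(x,f(x))f^{(n-1)}(x)+\cdots+a_0(x,f(x))f(x)=0,\qquad x\in(-a,a)\setminus\{0\},$$ satisfying $f(0)=f'(0)=\cdots=f^{(n-1)}(0)=0$. If there are $M>0$ and $\eta\in(0,a)$ such that $|a_k(x,f(x))|\le M$ for all $0<|x|<\eta$ and $k=0,1,\dots,n-1$, then there exists $\delta>0$ such that $f\equiv 0$ on $[-\delta,\delta]$.
   Context: The coefficients may be singular at $x=0$; the equation is only required to hold for $x\neq 0$. *)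

From Stdlib Require Export Reals Lra.
Open Scope R_scope.

Fixpoint rsum (n : nat) (g : nat -> R) : R :=
  match n with
  | O => 0
  | S m => rsum m g + g m
  end.

(* [smooth_on a D]: D 0 is C^infinity on (-a,a) and D k is its k-th
   derivative there (each D k is differentiable with derivative D (k+1)). *)
Definition smooth_on (a : R) (D : nat -> R -> R) : Prop :=
  forall (k : nat) (x : R), -a < x < a -> derivable_pt_lim (D k) x (D (S k) x).

(* Complex numbers as pairs (re, im). *)
Definition Cpx : Type := (R * R)%type.
Definition Cadd (z w : Cpx) : Cpx := (fst z + fst w, snd z + snd w).
Definition Cmul (z w : Cpx) : Cpx :=
  (fst z * fst w - snd z * snd w, fst z * snd w + snd z * fst w).
Definition Czero : Cpx := (0, 0).
Definition Cnorm (z : Cpx) : R := sqrt (fst z * fst z + snd z * snd z).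

Fixpoint csum (n : nat) (g : nat -> Cpx) : Cpx :=
  match n with
  | O => Czero
  | S m => Cadd (csum m g) (g m)
  end.

Definition smooth_onC (a : R) (D : nat -> R -> Cpx) : Prop :=
  smooth_on a (fun k x => fst (D k x)) /\ smooth_on a (fun k x => snd (D k x)).

From Stdlib Require Import Reals Lra Lia.
Open Scope R_scope.

(* Put S(x) = sum_{k<n} |f^(k)(x)|.  Near 0 the equation and the
   bound on the coefficients give |f^(k+1)(c)| <= (1+M) S(c) for all k < n and
   0 < |c| < eta.  On [-d,d] the continuous function S attains a maximum S*;
   since every f^(k) vanishes at 0, the mean value theorem gives
   |f^(k)(x)| <= d (1+M) S*, hence S* <= n d (1+M) S*, which forces S* = 0
   once n d (1+M) < 1.

   The real case applies it to f, f', ..., f^(n-1); the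
   complex case applies it to the 2n real and imaginary parts of these
   derivatives ([reim]).  The theorem is the conjunction of the two cases. *)

Lemma rsum_ext (N : nat) (f h : nat -> R) :
  (forall j, (j < N)%nat -> f j = h j) -> rsum N f = rsum N h.
Proof.
  induction N as [|N IH]; intros Hfh; simpl; [reflexivity|].
  rewrite IH by (intros; apply Hfh; lia). rewrite Hfh by lia; reflexivity.
Qed.

Lemma rsum_le (N : nat) (f h : nat -> R) :
  (forall j, (j < N)%nat -> f j <= h j) -> rsum N f <= rsum N h.
Proof.
  induction N as [|N IH]; intros Hfh; simpl; [lra|].
  apply Rplus_le_compat; [apply IH; intros; apply Hfh| apply Hfh]; lia.
Qed.

Lemma rsum_nonneg (N : nat) (f : nat -> R) :
  (forall j, (j < N)%nat -> 0 <= f j) -> 0 <= rsum N f.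
Proof.
  intros Hf. apply Rle_trans with (rsum N (fun _ => 0)).
  - clear Hf; induction N; simpl; lra.
  - now apply rsum_le.
Qed.

Lemma rsum_term (N : nat) (f : nat -> R) (j : nat) :
  (forall i, (i < N)%nat -> 0 <= f i) -> (j < N)%nat -> f j <= rsum N f.
Proof.
  induction N as [|N IH]; intros Hf Hj; [lia|]; simpl.
  destruct (Nat.eq_dec j N) as [->|Hne].
  - assert (0 <= rsum N f) by (apply rsum_nonneg; intros; apply Hf; lia). lra.
  - assert (f j <= rsum N f) by (apply IH; [intros; apply Hf|]; lia).
    assert (0 <= f N) by (apply Hf; lia). lra.
Qed.

Lemma rsum_const_le (N : nat) (f : nat -> R) (b : R) :
  (forall j, (j < N)%nat -> f j <= b) -> rsum N f <= INR N * b.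
Proof.
  induction N as [|N IH]; intros Hf; cbn [rsum]; [simpl; lra|].
  rewrite S_INR.
  assert (rsum N f <= INR N * b) by (apply IH; intros; apply Hf; lia).
  assert (f N <= b) by (apply Hf; lia). lra.
Qed.

Lemma rsum_abs (N : nat) (f : nat -> R) :
  Rabs (rsum N f) <= rsum N (fun j => Rabs (f j)).
Proof.
  induction N as [|N IH]; simpl; [rewrite Rabs_R0; lra|].
  eapply Rle_trans; [apply Rabs_triang|]. lra.
Qed.

Lemma rsum_scal (N : nat) (f : nat -> R) (c : R) :
  rsum N (fun j => c * f j) = c * rsum N f.
Proof. induction N as [|N IH]; simpl; [|rewrite IH]; ring. Qed.

Lemma rsum_plus (N : nat) (f h : nat -> R) :
  rsum N (fun j => f j + h j) = rsum N f + rsum N h.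
Proof. induction N as [|N IH]; simpl; [|rewrite IH]; ring. Qed.

Lemma rsum_app (n m : nat) (f : nat -> R) :
  rsum (n + m) f = rsum n f + rsum m (fun k => f (n + k)%nat).
Proof.
  induction m as [|m IH]; simpl; [rewrite Nat.add_0_r; ring|].
  rewrite Nat.add_succ_r; simpl; rewrite IH; ring.
Qed.

Lemma rsum_continuous (N : nat) (h : nat -> R -> R) (x : R) :
  (forall j, (j < N)%nat -> continuity_pt (h j) x) ->
  continuity_pt (fun y => rsum N (fun j => h j y)) x.
Proof.
  induction N as [|N IH]; intros Hh; simpl.
  - apply continuity_pt_const; intros u v; reflexivity.
  - apply (continuity_pt_plus (fun y => rsum N (fun j => h j y)) (h N));
      [apply IH; intros|]; apply Hh; lia.
Qed.

Lemma linear_combination_bound (N : nat) (a v : nat -> R) (M : R) :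
  (forall k, (k < N)%nat -> Rabs (a k) <= M) ->
  Rabs (rsum N (fun k => a k * v k)) <= M * rsum N (fun k => Rabs (v k)).
Proof.
  intros Ha. eapply Rle_trans; [apply rsum_abs|].
  rewrite <- rsum_scal. apply rsum_le; intros k Hk.
  rewrite Rabs_mult. apply Rmult_le_compat_r; [apply Rabs_pos| now apply Ha].
Qed.

Definition abs_sum (N : nat) (E : nat -> R -> R) (x : R) : R :=
  rsum N (fun i => Rabs (E i x)).

Lemma abs_sum_nonneg (N : nat) (E : nat -> R -> R) (x : R) : 0 <= abs_sum N E x.
Proof. apply rsum_nonneg; intros; apply Rabs_pos. Qed.

Lemma abs_sum_term (N : nat) (E : nat -> R -> R) (j : nat) (x : R) :
  (j < N)%nat -> Rabs (E j x) <= abs_sum N E x.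
Proof. intros Hj. apply (rsum_term N (fun i => Rabs (E i x))); auto using Rabs_pos. Qed.

Lemma Rabs_le_between (y d : R) : Rabs y <= d -> -d <= y <= d.
Proof.
  intros Hy. pose proof (Rle_abs y); pose proof (Rle_abs (- y)).
  rewrite Rabs_Ropp in *. lra.
Qed.

Lemma mvt_from_zero (F F' : R -> R) (x : R) :
  x <> 0 -> F 0 = 0 ->
  (forall y, Rabs y <= Rabs x -> derivable_pt_lim F y (F' y)) ->
  exists c, 0 < Rabs c < Rabs x /\ F x = F' c * x.
Proof.
  intros Hx HF0 HF.
  destruct (Rtotal_order x 0) as [Hneg|[Hzero|Hpos]]; [| contradiction |].
  - destruct (MVT_cor2 F F' x 0 Hneg) as [c [Hc Hxc]].
    { intros y Hy; apply HF; rewrite (Rabs_left x Hneg).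
      apply Rabs_le; lra. }
    exists c; rewrite (Rabs_left x Hneg), (Rabs_left c) by lra. split; lra.
  - destruct (MVT_cor2 F F' 0 x Hpos) as [c [Hc Hxc]].
    { intros y Hy; apply HF; rewrite (Rabs_right x) by lra.
      apply Rabs_le; lra. }
    exists c; rewrite (Rabs_right x), (Rabs_right c) by lra. split; lra.
Qed.

Lemma bound_from_zero (d B : R) (F F' : R -> R) :
  0 <= B ->
  (forall y, -d <= y <= d -> derivable_pt_lim F y (F' y)) -> F 0 = 0 ->
  (forall c, 0 < Rabs c < d -> Rabs (F' c) <= B) ->
  forall x, -d <= x <= d -> Rabs (F x) <= d * B.
Proof.
  intros HB HF HF0 HF' x Hx.
  assert (Hxd : Rabs x <= d) by (apply Rabs_le; lra).
  destruct (Req_dec x 0) as [->|Hx0]; [rewrite HF0, Rabs_R0; nra|].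
  destruct (mvt_from_zero F F' x Hx0 HF0) as [c [Hc ->]].
  { intros y Hy; apply HF; apply Rabs_le_between; lra. }
  rewrite Rabs_mult, (Rmult_comm d B).
  apply Rmult_le_compat; auto using Rabs_pos. apply HF'; lra.
Qed.

Lemma family_vanishes (N : nat) (d K : R) (E E' : nat -> R -> R) :
  0 < d -> 0 <= K -> INR N * d * K < 1 ->
  (forall j x, (j < N)%nat -> -d <= x <= d -> derivable_pt_lim (E j) x (E' j x)) ->
  (forall j, (j < N)%nat -> E j 0 = 0) ->
  (forall j c, (j < N)%nat -> 0 < Rabs c < d -> Rabs (E' j c) <= K * abs_sum N E c) ->
  forall j x, (j < N)%nat -> -d <= x <= d -> E j x = 0.
Proof.
  intros Hd HK Hsmall Hder HE0 HE' j x Hj Hx.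
  destruct (continuity_ab_maj (abs_sum N E) (-d) d) as [m [Hmax Hm]]; [lra| |].
  { intros c Hc. apply rsum_continuous; intros i Hi.
    apply (continuity_pt_comp (E i) Rabs); [|apply Rcontinuity_abs].
    apply derivable_continuous_pt; exists (E' i c); now apply Hder. }
  set (Smax := abs_sum N E m).
  assert (HSmax : 0 <= Smax) by apply abs_sum_nonneg.
  assert (Hmember : forall i y, (i < N)%nat -> -d <= y <= d ->
                      Rabs (E i y) <= d * (K * Smax)).
  { intros i y Hi Hy. apply (bound_from_zero d _ (E i) (E' i)); auto.
    - apply Rmult_le_pos; lra.
    - intros c Hc. eapply Rle_trans; [now apply HE'|].
      apply Rmult_le_compat_l; [lra| apply Hmax, Rabs_le_between; lra]. }
  assert (Hsum : Smax <= INR N * (d * (K * Smax))).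
  { apply rsum_const_le; intros i Hi; now apply Hmember. }
  assert (Hfac : (1 - INR N * d * K) * Smax <= 0) by lra.
  assert (HS0 : Smax = 0).
  { apply Rle_antisym; [|lra].
    apply Rmult_le_reg_l with (r := 1 - INR N * d * K);
      [lra| rewrite Rmult_0_r; lra]. }
  assert (Hjx : Rabs (E j x) <= 0).
  { rewrite <- HS0. eapply Rle_trans; [apply abs_sum_term, Hj| apply Hmax, Hx]. }
  destruct (Req_dec (E j x) 0) as [|Hne]; [assumption|].
  apply Rabs_pos_lt in Hne; lra.
Qed.

Lemma small_radius (eta C : R) :
  0 < eta -> 0 < C -> exists d, 0 < d < eta /\ d * C < 1.
Proof.
  intros Heta HC. exists (Rmin (eta / 2) (1 / (2 * C))).
  assert (Rmin (eta / 2) (1 / (2 * C)) <= eta / 2) by apply Rmin_l.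
  assert (Hr : Rmin (eta / 2) (1 / (2 * C)) <= 1 / (2 * C)) by apply Rmin_r.
  assert (0 < Rmin (eta / 2) (1 / (2 * C)))
    by (apply Rmin_pos; [lra| apply Rdiv_lt_0_compat; lra]).
  split; [lra|].
  apply Rmult_le_compat_r with (r := C) in Hr; [|lra].
  replace (1 / (2 * C) * C) with (1 / 2) in Hr by (field; lra). lra.
Qed.

Lemma shifted_derivative_bound (n : nat) (u : nat -> R) (W M : R) :
  0 <= W -> 0 <= M ->
  (forall i, (i < n)%nat -> Rabs (u i) <= W) -> Rabs (u n) <= M * W ->
  forall j, (j < n)%nat -> Rabs (u (S j)) <= (1 + M) * W.
Proof.
  intros HW HM Hlow Htop j Hj.
  destruct (Nat.eq_dec (S j) n) as [->|Hne]; [nra|].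
  assert (Rabs (u (S j)) <= W) by (apply Hlow; lia). nra.
Qed.

Lemma corollary3_real (n : nat) (a : R) (A : nat -> R -> R -> R) (D : nat -> R -> R) :
  (1 <= n)%nat -> 0 < a -> smooth_on a D ->
  (forall x, -a < x < a -> x <> 0 ->
     D n x + rsum n (fun k => A k x (D O x) * D k x) = 0) ->
  (forall k, (k < n)%nat -> D k 0 = 0) ->
  (exists M eta, 0 < M /\ 0 < eta < a /\
     forall x k, 0 < Rabs x < eta -> (k < n)%nat -> Rabs (A k x (D O x)) <= M) ->
  exists delta, 0 < delta < a /\ forall x, -delta <= x <= delta -> D O x = 0.
Proof.
  intros Hn Ha Hsmooth Hode HD0 [M [eta [HM [Heta HA]]]].
  assert (Hn' : 1 <= INR n) by (apply (le_INR 1); lia).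
  destruct (small_radius eta (INR n * (1 + M))) as [d [Hd Hdsmall]]; [lra| nra|].
  exists d; split; [lra|]. intros x Hx.
  apply (family_vanishes n d (1 + M) D (fun j => D (S j))) with (j := O);
    auto; try lra; try lia.
  - intros j y _ Hy. apply Hsmooth; lra.
  - intros j c Hj Hc.
    apply (shifted_derivative_bound n (fun k => D k c)); auto using abs_sum_nonneg.
    + lra.
    + intros i Hi; now apply abs_sum_term.
    + assert (Hc0 : c <> 0) by (intros ->; rewrite Rabs_R0 in Hc; lra).
      assert (Hca : -a < c < a) by (destruct Hc as [_ Hc]; apply Rabs_def2 in Hc; lra).
      replace (D n c) with (- rsum n (fun k => A k c (D O c) * D k c))
        by (specialize (Hode c Hca Hc0); lra).
      rewrite Rabs_Ropp. apply linear_combination_bound.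
      intros k Hk; apply HA; auto; lra.
Qed.

Lemma fst_le_Cnorm (z : Cpx) : Rabs (fst z) <= Cnorm z.
Proof. unfold Cnorm. rewrite <- sqrt_Rsqr_abs. apply sqrt_le_1_alt. unfold Rsqr. nra. Qed.

Lemma snd_le_Cnorm (z : Cpx) : Rabs (snd z) <= Cnorm z.
Proof. unfold Cnorm. rewrite <- sqrt_Rsqr_abs. apply sqrt_le_1_alt. unfold Rsqr. nra. Qed.

Lemma Cmul_components_bound (z w : Cpx) :
  Rabs (fst (Cmul z w)) <= Cnorm z * (Rabs (fst w) + Rabs (snd w)) /\
  Rabs (snd (Cmul z w)) <= Cnorm z * (Rabs (fst w) + Rabs (snd w)).
Proof.
  pose proof (fst_le_Cnorm z); pose proof (snd_le_Cnorm z).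
  pose proof (Rabs_pos (fst z)); pose proof (Rabs_pos (snd z)).
  pose proof (Rabs_pos (fst w)); pose proof (Rabs_pos (snd w)).
  unfold Cmul; simpl; split.
  - unfold Rminus; eapply Rle_trans; [apply Rabs_triang|].
    rewrite Rabs_Ropp, !Rabs_mult. nra.
  - eapply Rle_trans; [apply Rabs_triang|]. rewrite !Rabs_mult. nra.
Qed.

Lemma fst_csum (n : nat) (h : nat -> Cpx) : fst (csum n h) = rsum n (fun k => fst (h k)).
Proof. induction n as [|n IH]; simpl; [|rewrite IH]; reflexivity. Qed.

Lemma snd_csum (n : nat) (h : nat -> Cpx) : snd (csum n h) = rsum n (fun k => snd (h k)).
Proof. induction n as [|n IH]; simpl; [|rewrite IH]; reflexivity. Qed.

Lemma complex_top_bound (n : nat) (M : R) (c : Cpx) (a v : nat -> Cpx) :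
  (forall k, (k < n)%nat -> Cnorm (a k) <= M) ->
  Cadd c (csum n (fun k => Cmul (a k) (v k))) = Czero ->
  Rabs (fst c) <= M * rsum n (fun k => Rabs (fst (v k)) + Rabs (snd (v k))) /\
  Rabs (snd c) <= M * rsum n (fun k => Rabs (fst (v k)) + Rabs (snd (v k))).
Proof.
  intros Ha Heq.
  assert (Hre := f_equal fst Heq); assert (Him := f_equal snd Heq).
  simpl in Hre, Him; rewrite fst_csum in Hre; rewrite snd_csum in Him.
  replace (fst c) with (- rsum n (fun k => fst (Cmul (a k) (v k)))) by lra.
  replace (snd c) with (- rsum n (fun k => snd (Cmul (a k) (v k)))) by lra.
  rewrite !Rabs_Ropp, <- rsum_scal. split;
    (eapply Rle_trans; [apply rsum_abs| apply rsum_le; intros k Hk]);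
    destruct (Cmul_components_bound (a k) (v k)) as [Hfst Hsnd];
    pose proof (Ha k Hk); pose proof (Rabs_pos (fst (v k)));
    pose proof (Rabs_pos (snd (v k))); nra.
Qed.

Definition reim (n : nat) (D : nat -> R -> Cpx) (k : nat) (x : R) : R :=
  if (k <? n)%nat then fst (D k x) else snd (D (k - n)%nat x).

Lemma reim_fst (n : nat) (D : nat -> R -> Cpx) (k : nat) (x : R) :
  (k < n)%nat -> reim n D k x = fst (D k x).
Proof. intros Hk; unfold reim; now rewrite (proj2 (Nat.ltb_lt k n) Hk). Qed.

Lemma reim_snd (n : nat) (D : nat -> R -> Cpx) (k : nat) (x : R) :
  reim n D (n + k) x = snd (D k x).
Proof.
  unfold reim; rewrite (proj2 (Nat.ltb_ge (n + k) n)) by lia.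
  now replace (n + k - n)%nat with k by lia.
Qed.

Lemma reim_derivable (n : nat) (a : R) (D : nat -> R -> Cpx) :
  smooth_onC a D ->
  forall k x, -a < x < a ->
    derivable_pt_lim (reim n D k) x (reim n (fun i => D (S i)) k x).
Proof.
  intros [Hre Him] k x Hx; unfold reim.
  destruct (k <? n)%nat; [apply Hre| apply Him]; exact Hx.
Qed.

Lemma reim_zero (n : nat) (D : nat -> R -> Cpx) :
  (forall k, (k < n)%nat -> D k 0 = Czero) ->
  forall k, (k < n + n)%nat -> reim n D k 0 = 0.
Proof.
  intros HD0 k Hk; unfold reim; destruct (k <? n)%nat eqn:Hkn;
    [apply Nat.ltb_lt in Hkn| apply Nat.ltb_ge in Hkn];
    rewrite HD0 by lia; reflexivity.
Qed.

Lemma abs_sum_reim (n : nat) (D : nat -> R -> Cpx) (x : R) :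
  abs_sum (n + n) (reim n D) x =
  rsum n (fun k => Rabs (fst (D k x)) + Rabs (snd (D k x))).
Proof.
  unfold abs_sum; rewrite rsum_app, rsum_plus.
  f_equal; apply rsum_ext; intros k Hk; [now rewrite reim_fst| now rewrite reim_snd].
Qed.

Lemma reim_derivative_bound (n : nat) (M c : R) (D : nat -> R -> Cpx) :
  0 <= M ->
  Rabs (fst (D n c)) <= M * abs_sum (n + n) (reim n D) c ->
  Rabs (snd (D n c)) <= M * abs_sum (n + n) (reim n D) c ->
  forall j, (j < n + n)%nat ->
    Rabs (reim n (fun i => D (S i)) j c) <= (1 + M) * abs_sum (n + n) (reim n D) c.
Proof.
  intros HM Htop_re Htop_im j Hj; unfold reim at 1.
  destruct (j <? n)%nat eqn:Hjn; [apply Nat.ltb_lt in Hjn| apply Nat.ltb_ge in Hjn].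
  - apply (shifted_derivative_bound n (fun k => fst (D k c)));
      auto using abs_sum_nonneg.
    intros i Hi; rewrite <- (reim_fst n D i c Hi); apply abs_sum_term; lia.
  - apply (shifted_derivative_bound n (fun k => snd (D k c)));
      auto using abs_sum_nonneg; [|lia].
    intros i Hi; rewrite <- (reim_snd n D i c); apply abs_sum_term; lia.
Qed.

Lemma corollary3_complex (n : nat) (a : R) (A : nat -> R -> Cpx -> Cpx)
    (D : nat -> R -> Cpx) :
  (1 <= n)%nat -> 0 < a -> smooth_onC a D ->
  (forall x, -a < x < a -> x <> 0 ->
     Cadd (D n x) (csum n (fun k => Cmul (A k x (D O x)) (D k x))) = Czero) ->
  (forall k, (k < n)%nat -> D k 0 = Czero) ->
  (exists M eta, 0 < M /\ 0 < eta < a /\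
     forall x k, 0 < Rabs x < eta -> (k < n)%nat -> Cnorm (A k x (D O x)) <= M) ->
  exists delta, 0 < delta < a /\ forall x, -delta <= x <= delta -> D O x = Czero.
Proof.
  intros Hn Ha Hsmooth Hode HD0 [M [eta [HM [Heta HA]]]].
  assert (Hn' : 1 <= INR (n + n)) by (apply (le_INR 1); lia).
  destruct (small_radius eta (INR (n + n) * (1 + M))) as [d [Hd Hdsmall]];
    [lra| nra|].
  exists d; split; [lra|]. intros x Hx.
  assert (Hvanish : forall k, (k < n + n)%nat -> reim n D k x = 0).
  { intros k Hk.
    apply (family_vanishes (n + n) d (1 + M) (reim n D) (reim n (fun i => D (S i))));
      auto using reim_zero; try lra.
    - intros j y _ Hy. apply (reim_derivable n a D Hsmooth); lra.
    - intros j c Hj Hc.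
      assert (Hc0 : c <> 0) by (intros ->; rewrite Rabs_R0 in Hc; lra).
      assert (Hca : -a < c < a) by (destruct Hc as [_ Hc]; apply Rabs_def2 in Hc; lra).
      destruct (complex_top_bound n M (D n c) (fun k => A k c (D O c)) (fun k => D k c))
        as [Htop_re Htop_im]; [intros i Hi; apply HA; auto; lra| now apply Hode|].
      rewrite <- abs_sum_reim in Htop_re, Htop_im.
      apply reim_derivative_bound; auto; lra. }
  assert (Hfst := Hvanish O ltac:(lia)); assert (Hsnd := Hvanish (n + 0)%nat ltac:(lia)).
  rewrite reim_fst in Hfst by lia; rewrite reim_snd in Hsnd.
  destruct (D O x) as [u v]; simpl in *; now subst.
Qed.

Theorem corollary3 :
  (* K = R *)
  (forall (n : nat) (a : R) (A : nat -> R -> R -> R) (D : nat -> R -> R),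
     (1 <= n)%nat -> 0 < a ->
     smooth_on a D ->
     (forall x, -a < x < a -> x <> 0 ->
        D n x + rsum n (fun k => A k x (D O x) * D k x) = 0) ->
     (forall k, (k < n)%nat -> D k 0 = 0) ->
     (exists M eta, 0 < M /\ 0 < eta < a /\
        forall x k, 0 < Rabs x < eta -> (k < n)%nat -> Rabs (A k x (D O x)) <= M) ->
     exists delta, 0 < delta < a /\ forall x, -delta <= x <= delta -> D O x = 0)
  /\
  (* K = C *)
  (forall (n : nat) (a : R) (A : nat -> R -> Cpx -> Cpx) (D : nat -> R -> Cpx),
     (1 <= n)%nat -> 0 < a ->
     smooth_onC a D ->
     (forall x, -a < x < a -> x <> 0 ->
        Cadd (D n x) (csum n (fun k => Cmul (A k x (D O x)) (D k x))) = Czero) ->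
     (forall k, (k < n)%nat -> D k 0 = Czero) ->
     (exists M eta, 0 < M /\ 0 < eta < a /\
        forall x k, 0 < Rabs x < eta -> (k < n)%nat -> Cnorm (A k x (D O x)) <= M) ->
     exists delta, 0 < delta < a /\ forall x, -delta <= x <= delta -> D O x = Czero).
Proof. split; [exact corollary3_real| exact corollary3_complex]. Qed.
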